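(* Let $\Sigma$ be a finite alphabet and $f,f'\in H_\Sigma$ forests. Then: (1) no two distinct sibling nodes in $\Psi(f)$ carry the same label; (2) $\pi(f)=\pi(\Psi(f))$; (3) $\pi(f)=\pi(f')$ if and only if $\Psi(f)=\Psi(f')$.
   Context: Trees over $\Sigma$ are $\alpha[C]$ with $\alpha\in\Sigma$ and $C$ a finite set of trees (order and multiplicity of children ignored). Forests are finite sets of trees, with union written $+$. For a forest $f$, $\pi(f)\subseteq\Sigma^*$ is the set of (not necessarily maximal) label paths starting at a root, including the empty word. The map $\Psi:H_\Sigma\to H_\Sigma$ is defined recursively as follows. Write $f=\beta_1[f_1]+\dots+\beta_n[f_n]$ ($n\ge 0$), where $\beta_i\in\Sigma$ and the $f_i$ are forests. For each $\beta\in\{\beta_1,\dots,\beta_n\}$ let $F_\beta=\{f_i:\beta_i=\beta\}$. Then $$\Psi(f)=\sum_{\beta\in\{\beta_1,\dots,\beta_n\}}\beta\Big[\Psi\Big(\sum_{f'\in F_\beta}f'\Big)\Big].$$ *)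

(* Unordered trees with sets of children are represented by
   rose trees with lists of children, modulo hereditary set equality [teq]. *)
From mathcomp Require Import all_boot.
Set Implicit Arguments. Unset Strict Implicit. Unset Printing Implicit Defensive.

Section Trees.
Variable Sigma : finType.

Inductive tree : Type := Node : Sigma -> seq tree -> tree.
Definition forest := seq tree.

Definition label (t : tree) : Sigma := let: Node a _ := t in a.
Definition children (t : tree) : forest := let: Node _ c := t in c.

Fixpoint teq (t u : tree) {struct t} : bool :=
  match t, u with
  | Node a c, Node b d =>
      [&& a == b,
          all (fun x => has (fun y => teq x y) d) c &
          all (fun y => has (fun x => teq x y) c) d]
  end.

Definition feq (f g : forest) : bool :=
  all (fun x => has (fun y => teq x y) g) f &&
  all (fun y => has (fun x => teq x y) f) g.

Fixpoint tpath (t : tree) (w : seq Sigma) {struct t} : bool :=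
  match t with
  | Node b c =>
      match w with
      | [::] => true
      | a :: w' => (b == a) &&
          match w' with
          | [::] => true
          | _ => has (fun x => tpath x w') c
          end
      end
  end.

(* w \in pi(f) ; pi(f) always contains the empty word *)
Definition pi_mem (f : forest) (w : seq Sigma) : bool :=
  (w == [::]) || has (fun t => tpath t w) f.

Definition same_paths (f g : forest) : Prop := forall w, pi_mem f w = pi_mem g w.

Fixpoint tdepth (t : tree) : nat :=
  match t with Node _ c => (foldr maxn 0 (map tdepth c)).+1 end.
Definition fdepth (f : forest) : nat := foldr maxn 0 (map tdepth f).

(* Psi with fuel: for each root label beta occurring in f, a single node
   beta[Psi(sum of the child forests of the roots labelled beta)] *)
Fixpoint Psi_fuel (n : nat) (f : forest) : forest :=
  match n with
  | 0 => [::]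
  | n'.+1 =>
      [seq Node b (Psi_fuel n'
                     (flatten [seq children t | t <- f & label t == b]))
      | b <- undup (map label f)]
  end.

(* the fuel fdepth f is sufficient: child forests have strictly smaller depth *)
Definition Psi (f : forest) : forest := Psi_fuel (fdepth f) f.

Definition siblings_ok (c : forest) : bool :=
  all (fun x => all (fun y => (label x == label y) ==> teq x y) c) c.

Fixpoint tgood (t : tree) : bool :=
  match t with Node _ c => siblings_ok c && all tgood c end.

Definition fgood (f : forest) : bool := siblings_ok f && all tgood f.

End Trees.

(* A path a :: w lies in pi(f) iff a labels a root of f and w lies in pi(F_a),
   where F_a is the forest of children of the a-labelled roots.  Psi f has exactly
   one root for each root label a of f, with children Psi(F_a), so
   pi(Psi f) = pi(f) by induction on the length of paths.  Conversely, forests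
   with the same paths have the same root labels and the same paths in every F_a,
   so by induction on depth their images under Psi match node by node.  Taking
   f' = f shows that every node of Psi f is equivalent to itself; since sibling
   labels in Psi f are distinct, this gives (1). *)
From mathcomp Require Import all_boot.
Set Implicit Arguments. Unset Strict Implicit. Unset Printing Implicit Defensive.

Lemma has_transfer (T : Type) (r : T -> T -> bool) (p : pred T) (s1 s2 : seq T) :
  (forall x y, r x y -> p x -> p y) ->
  all (fun x => has (r x) s2) s1 -> has p s1 -> has p s2.
Proof.
move=> rp; elim: s1 => //= x s1 IHs1 /andP[xs2 s12] /orP[px|].
- by apply: sub_has xs2 => y /rp; apply.
- exact: IHs1.
Qed.

Section Psi.
Variable Sigma : finType.
Implicit Types (f g c d : forest Sigma) (t u : tree Sigma) (w : seq Sigma).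

Local Notation labels f := (map (@label Sigma) f).

Definition subforest f (a : Sigma) : forest Sigma :=
  flatten [seq children t | t <- f & label t == a].

Lemma has_subforest (p : pred (tree Sigma)) f a :
  has p (subforest f a) = has (fun t => (label t == a) && has p (children t)) f.
Proof.
by rewrite /subforest; elim: f => //= t f IHf; case: (label t == a); rewrite /= ?has_cat IHf.
Qed.

Lemma teq_Node a b c d : teq (Node a c) (Node b d) = (a == b) && feq c d.
Proof. by []. Qed.

Lemma fdepth_le f n : (fdepth f <= n) = all (fun t => tdepth t <= n) f.
Proof. by rewrite /fdepth; elim: f => //= t f IHf; rewrite geq_max IHf. Qed.

Lemma fdepth0 f : fdepth f <= 0 -> f = [::].
Proof. by rewrite fdepth_le; case: f => // -[]. Qed.

Lemma fdepth_subforest f a n : fdepth f <= n.+1 -> fdepth (subforest f a) <= n.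
Proof.
rewrite !fdepth_le /subforest; elim: f => //= -[b c] f IHf /andP[dc df].
by case: (b == a); rewrite /= ?all_cat (IHf df) -?fdepth_le ?andbT.
Qed.

Lemma forest_ind (P : forest Sigma -> Prop) :
  (forall f, (forall a, a \in labels f -> P (subforest f a)) -> P f) ->
  forall f, P f.
Proof.
move=> IH f; suff: forall n g, fdepth g <= n -> P g by apply; apply: leqnn.
elim=> [|n IHn] g dg; apply: IH => a ag.
- by rewrite (fdepth0 dg) in ag.
- exact/IHn/fdepth_subforest.
Qed.

Lemma Psi_fuel_eq n m f :
  fdepth f <= n -> fdepth f <= m -> Psi_fuel n f = Psi_fuel m f.
Proof.
elim: n m f => [|n IHn] [|m] f dn dm //.
- by rewrite (fdepth0 dn).
- by rewrite (fdepth0 dm).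
apply: eq_map => a; congr Node.
by apply: IHn; apply: fdepth_subforest.
Qed.

Lemma PsiE f :
  Psi f = [seq Node a (Psi (subforest f a)) | a <- undup (labels f)].
Proof.
rewrite {1}/Psi; case df: (fdepth f) => [|n].
  by rewrite (fdepth0 (eq_leq df)).
apply: eq_map => a; congr Node; apply: Psi_fuel_eq => //.
by apply: fdepth_subforest; rewrite df.
Qed.

Lemma labels_Psi f : labels (Psi f) = undup (labels f).
Proof. by rewrite PsiE -map_comp map_id. Qed.

Lemma subforest_Psi f a :
  a \in labels f -> subforest (Psi f) a = Psi (subforest f a).
Proof.
move=> af; rewrite {1}PsiE /subforest filter_map /=.
by rewrite (filter_pred1_uniq (undup_uniq _)) ?mem_undup //= cats0.
Qed.

Lemma tpath_cons t a w :
  tpath t (a :: w) = (label t == a) && pi_mem (children t) w.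
Proof. by case: t => b c; case: w => [|x w]; rewrite /= ?andbT. Qed.

Lemma pi_mem_cons f a w :
  pi_mem f (a :: w) = (a \in labels f) && pi_mem (subforest f a) w.
Proof.
have labelsE : (a \in labels f) = has (fun t => label t == a) f.
  by rewrite -has_pred1 has_map; apply: eq_has => t; rewrite /= eq_sym.
rewrite labelsE /pi_mem /=; under eq_has do rewrite tpath_cons.
case: w => [|x w] /=; first by under eq_has do rewrite andbT; rewrite andbT.
rewrite has_subforest; apply/idP/andP => [ha|[_ //]].
by split=> //; apply: sub_has ha => t /andP[].
Qed.

Lemma mem_labels_pi f a : (a \in labels f) = pi_mem f [:: a].
Proof. by rewrite pi_mem_cons andbT. Qed.

Lemma pi_mem_Psi f w : pi_mem (Psi f) w = pi_mem f w.
Proof.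
elim: w f => // a w IHw f; rewrite !pi_mem_cons labels_Psi mem_undup.
by case af: (a \in _); rewrite //= subforest_Psi ?IHw.
Qed.

Lemma pi_mem_feq c d w : feq c d -> pi_mem c w = pi_mem d w.
Proof.
elim: w c d => // a w IHw c d /andP[cd dc].
have tpath_teq t u : teq t u -> tpath t (a :: w) = tpath u (a :: w).
  by case: t u => b c' [b' d']; rewrite teq_Node !tpath_cons => /andP[/eqP-> /IHw->].
rewrite /pi_mem /=; apply/idP/idP.
- by apply: has_transfer cd => t u /tpath_teq ->.
- by apply: has_transfer dc => u t /tpath_teq <-.
Qed.

Lemma same_paths_subforest f g a :
  same_paths f g -> a \in labels f -> same_paths (subforest f a) (subforest g a).
Proof.
move=> fg af w; have := fg (a :: w).
by rewrite !pi_mem_cons af [a \in labels g]mem_labels_pi -fg -mem_labels_pi af.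
Qed.

Lemma feq_Psi f g : same_paths f g -> feq (Psi f) (Psi g).
Proof.
elim/forest_ind: f g => f IHf g fg.
have labelsE a : (a \in labels f) = (a \in labels g).
  by rewrite !mem_labels_pi fg.
have teq_roots a : a \in labels f ->
    teq (Node a (Psi (subforest f a))) (Node a (Psi (subforest g a))).
  by move=> af; rewrite teq_Node eqxx; apply/IHf/same_paths_subforest.
rewrite !PsiE /feq !all_map; apply/andP; split; apply/allP => a.
- rewrite mem_undup => af /=; rewrite has_map; apply/hasP.
  by exists a; [rewrite mem_undup -labelsE | exact: teq_roots].
- rewrite mem_undup -labelsE => af /=; rewrite has_map; apply/hasP.
  by exists a; [rewrite mem_undup | exact: teq_roots].
Qed.

Lemma fgood_Psi f : fgood (Psi f).
Proof.
elim/forest_ind: f => f IHf; rewrite PsiE /fgood /siblings_ok !all_map.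
apply/andP; split; apply/allP => a; rewrite mem_undup => af.
- rewrite /= all_map; apply/allP => b _; apply/implyP => /= /eqP <-.
  by rewrite eqxx; apply: feq_Psi.
- exact: IHf.
Qed.

End Psi.

Theorem mainTheorem6 (Sigma : finType) (f f' : forest Sigma) :
  fgood (Psi f) /\
  same_paths f (Psi f) /\
  (same_paths f f' <-> feq (Psi f) (Psi f')).
Proof.
split; first exact: fgood_Psi.
split; first by move=> w; rewrite pi_mem_Psi.
split; first exact: feq_Psi.
by move=> /pi_mem_feq Psi_ff' w; rewrite -[LHS]pi_mem_Psi Psi_ff' pi_mem_Psi.
Qed.
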